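(* Let $p\equiv 1\pmod 4$ be a prime. Then $$\prod_{1\le i<j\le \frac{p-1}{2}}(j^2-i^2)\equiv-\Big(\frac{p-1}{2}\Big)!\pmod p.$$ *)

From HB Require Import structures.
From mathcomp Require Import all_boot all_order all_algebra.

From HB Require Import structures.
From mathcomp Require Import all_boot all_order all_algebra.
From mathcomp Require Import ring zify.
Import GRing.Theory Num.Theory.

Set Implicit Arguments.
Unset Strict Implicit.
Unset Printing Implicit Defensive.
Local Open Scope ring_scope.

(* Write n = (p-1)/2.  Since j^2 - i^2 = (j - i)(j + i), the inner product
   over i < j equals (2j-1)!/j, so the whole product N satisfies
   N * n! = 1! 3! ... (2n-1)!.  Wilson's theorem gives k! (p-1-k)! = (-1)^(k+1)
   mod p, so the odd factorials pair off as (2j+1)! (2n-2j-1)! = 1, with no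
   unpaired factor because n is even when p = 1 mod 4; likewise n!^2 = -1.
   Hence N = n!^-1 = -n! mod p. *)

Lemma prod_sqr_subn_mul (j : nat) :
  ((\prod_(1 <= i < j.+1) (j.+1 ^ 2 - i ^ 2)) * j.+1 = (j.*2.+1)`!)%N.
Proof.
rewrite (eq_big_nat _ _ (F2 := fun i => (j.+1 - i) * (j.+1 + i))%N);
  last by move=> i _; rewrite subn_sqr.
rewrite big_split /=.
have prod_sub : (\prod_(1 <= i < j.+1) (j.+1 - i) = j`!)%N.
  by rewrite big_nat_rev fact_prod; apply: eq_big_nat => i /andP [? ?]; lia.
have prod_add : (\prod_(1 <= i < j.+1) (j.+1 + i)
                 = \prod_(j.+2 <= k < j.*2.+2) k)%N.
  rewrite -[j.+2]/(1 + j.+1)%N big_addn.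
  have -> : (j.*2.+2 - j.+1 = j.+1)%N by lia.
  by apply: eq_bigr => i _; rewrite addnC.
rewrite prod_sub prod_add mulnAC [(j`! * _)%N]mulnC -factS.
rewrite [in RHS]fact_prod [in X in (X * _)%N]fact_prod -big_cat_nat //; lia.
Qed.

Lemma prod_prod_sqr_subn_mul_fact (n : nat) :
  ((\prod_(1 <= j < n.+1) \prod_(1 <= i < j) (j ^ 2 - i ^ 2)) * n`!
   = \prod_(0 <= j < n) (j.*2.+1)`!)%N.
Proof.
rewrite big_add1 /= fact_prod big_add1 /= -big_split /=.
by apply: eq_bigr => j _; exact: prod_sqr_subn_mul.
Qed.

Section PrimeCharacteristic.

Variables (R : comNzRingType) (p : nat).
Hypothesis pcharRp : p \in [pchar R].

Lemma natr_fact_pred_pchar : (p.-1)`!%:R = -1 :> R.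
Proof.
have : (p.-1)`!.+1%:R == 0 :> R.
  by rewrite -(dvdn_pcharf pcharRp) -Wilson ?prime_gt1 ?(pcharf_prime pcharRp).
by rewrite -addn1 natrD addr_eq0 => /eqP.
Qed.

Lemma natr_fact_mul_fact_subn (k : nat) :
  (k < p)%N -> (k`! * (p.-1 - k)`!)%:R = (-1) ^+ k.+1 :> R.
Proof.
elim: k => [_|k IHk lt_kp].
  by rewrite fact0 mul1n subn0 natr_fact_pred_pchar expr1.
have pred_sub : (p.-1 - k = (p.-1 - k.+1).+1)%N by lia.
have succ_opp : k.+1%:R = - (p.-1 - k.+1).+1%:R :> R.
  apply/eqP; rewrite -addr_eq0 -natrD.
  have -> : (k.+1 + (p.-1 - k.+1).+1 = p)%N by lia.
  by rewrite (pcharf0 pcharRp).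
move: (IHk (ltnW lt_kp)); rewrite pred_sub !factS !natrM succ_opp.
by rewrite [(-1) ^+ k.+2]exprS => <-; ring.
Qed.

Variable m : nat.
Hypothesis p_eq : p = (m * 4).+1.

(* (2j+1)! pairs with (p-1-(2j+1))! = (2(2m-1-j)+1)!, another factor. *)
Lemma natr_prod_odd_fact : (\prod_(0 <= j < m.*2) (j.*2.+1)`!)%:R = 1 :> R.
Proof.
rewrite -addnn (big_cat_nat _ (n := m)) ?leq_addr //.
rewrite -{2}[m]add0n big_addn addnK big_nat_rev add0n.
rewrite natrM !natr_prod -big_split /= big_nat_cond big1 // => i.
move=> /andP [/andP [_ lt_im] _].
have -> : ((i + m).*2.+1 = p.-1 - (m - i.+1).*2.+1)%N by lia.
rewrite -natrM natr_fact_mul_fact_subn; last by lia.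
have -> : ((m - i.+1).*2.+2 = (m - i).*2)%N by lia.
by rewrite -mul2n exprM sqrrN !expr1n.
Qed.

Lemma natr_fact_half_sqr : (m.*2)`!%:R ^+ 2 = -1 :> R.
Proof.
rewrite expr2 -natrM.
have {2}-> : (m.*2 = p.-1 - m.*2)%N by lia.
rewrite natr_fact_mul_fact_subn; last by lia.
by rewrite -mul2n exprS exprM sqrrN !expr1n mulr1.
Qed.

End PrimeCharacteristic.

Theorem lemma2p1 (p : nat) (hp : prime p) (hp4 : p = 1 %[mod 4]) :
  ((\prod_(1 <= j < (p.-1./2).+1) \prod_(1 <= i < j)
      ((j ^ 2)%:Z - (i ^ 2)%:Z))
   = - ((p.-1./2)`!)%:Z %[mod p])%Z.
Proof.
have [m p_eq] : exists m, p = (m * 4).+1.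
  by exists (p %/ 4)%N; rewrite {1}(divn_eq p 4) hp4 addn1.
have -> : p.-1 = (m.*2).*2 by lia.
rewrite doubleK.
set N := (\prod_(1 <= j < m.*2.+1) \prod_(1 <= i < j) (j ^ 2 - i ^ 2))%N.
have -> : \prod_(1 <= j < m.*2.+1) \prod_(1 <= i < j) ((j ^ 2)%:Z - (i ^ 2)%:Z)
          = N%:Z.
  rewrite /N (big_morph Posz PoszM (erefl _)); apply: eq_big_nat => j _.
  rewrite (big_morph Posz PoszM (erefl _)); apply: eq_big_nat => i /andP [_ lt_ij].
  by rewrite subzn // leq_exp2r // ltnW.
have pcharFp := pchar_Fp hp.
apply/eqP; rewrite eqz_mod_dvd (dvdz_pcharf pcharFp) opprK -PoszD -pmulrn natrD.
set x := (m.*2)`!%:R : 'F_p.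
have Nx : N%:R * x = 1.
  by rewrite -natrM prod_prod_sqr_subn_mul_fact (natr_prod_odd_fact pcharFp p_eq).
have xx : x ^+ 2 = -1 := natr_fact_half_sqr pcharFp p_eq.
have : x = N%:R * x ^+ 2 by rewrite expr2 mulrCA Nx mulr1.
by rewrite xx mulrN1 => ->; rewrite subrr.
Qed.
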